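(* Let $G=(V,E)$ be a comparability graph with $V=\{v_1,\dots,v_n\}$. For distinct $u_1,\dots,u_k\in V$, let $G\setminus u_1\cdots u_k$ be the subgraph of $G$ induced on $V\setminus\{u_1,\dots,u_k\}$. Then $$\varepsilon(G)\ge\sum_{\sigma\in\mathfrak S_n}\prod_{k=0}^{n-1}\frac{1}{\chi\big(G\setminus v_{\sigma(1)}v_{\sigma(2)}\cdots v_{\sigma(k)}\big)},$$ where the $k=0$ factor is $1/\chi(G)$, $\mathfrak S_n$ is the symmetric group on $[n]$, and $\chi$ denotes chromatic number.
   Context: A comparability graph is a simple undirected graph $G=(V,E)$ for which there is a partial order on $V$ under which two distinct vertices are comparable iff they are adjacent. For an undirected simple graph $G=(V,E)$, $\varepsilon(G)$ denotes the maximum, over all acyclic orientations of $E$, of the number of linear extensions of the partial order induced on $V$ (where $u<v$ iff there is a directed path from $u$ to $v$; a linear extension of a poset on an $n$-element set is an order-preserving bijection onto $[n]$). *)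

From mathcomp Require Import all_boot all_order all_algebra all_fingroup.
Set Implicit Arguments. Unset Strict Implicit. Unset Printing Implicit Defensive.

(* A simple undirected graph on vertex set 'I_n is a symmetric irreflexive
   relation e : rel 'I_n (the vertices v_1..v_n are the ordinals 0..n-1). *)

Definition comparability_graph (n : nat) (e : rel 'I_n) : Prop :=
  exists R : rel 'I_n,
    reflexive R /\ antisymmetric R /\ transitive R /\
    forall u v, u != v -> e u v = (R u v || R v u).

Definition orientation (n : nat) (e : rel 'I_n) (o : {set 'I_n * 'I_n}) : bool :=
  [forall u, forall v, (e u v == (((u, v) \in o) || ((v, u) \in o)))
                       && ~~ (((u, v) \in o) && ((v, u) \in o))].

Definition orel (n : nat) (o : {set 'I_n * 'I_n}) : rel 'I_n :=
  fun u v => (u, v) \in o.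

Definition acyclic_or (n : nat) (o : {set 'I_n * 'I_n}) : bool :=
  [forall u, forall v, orel o u v ==> ~~ connect (orel o) v u].

(* Strict order induced by the orientation: u < v iff directed path u -> v
   (of positive length; for an acyclic orientation equivalently u != v). *)
Definition induced_lt (n : nat) (o : {set 'I_n * 'I_n}) (u v : 'I_n) : bool :=
  (u != v) && connect (orel o) u v.

Definition linext_count (n : nat) (o : {set 'I_n * 'I_n}) : nat :=
  #|[set p : 'S_n | [forall u, forall v, induced_lt o u v ==> (p u < p v)]]|.

Definition epsilon (n : nat) (e : rel 'I_n) : nat :=
  \max_(o : {set 'I_n * 'I_n} | orientation e o && acyclic_or o) linext_count o.

(* proper colouring of the subgraph induced on S with c colours
   (the guard x != y is vacuous for simple graphs, which are irreflexive) *)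
Definition colorable (n : nat) (e : rel 'I_n) (S : {set 'I_n}) (c : nat) : bool :=
  [exists f : {ffun 'I_n -> 'I_c},
     [forall x in S, forall y in S, (x != y) && e x y ==> (f x != f y)]].

Lemma colorable_n (n : nat) (e : rel 'I_n) (S : {set 'I_n}) :
  exists c, colorable e S c.
Proof.
exists n.
apply/existsP.
exists [ffun x : 'I_n => x].
apply/forall_inP => x _; apply/forall_inP => y _; apply/implyP => /andP[nxy _].
by rewrite !ffunE.
Qed.

Definition chi (n : nat) (e : rel 'I_n) (S : {set 'I_n}) : nat :=
  ex_minn (colorable_n e S).

(* the vertices v_{sigma(1)},...,v_{sigma(k)} (0-indexed: sigma 0..sigma (k-1)) *)
Definition first_k (n : nat) (s : 'S_n) (k : nat) : {set 'I_n} :=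
  s @: [set i : 'I_n | i < k].

From mathcomp Require Import all_boot all_order all_algebra all_fingroup.
Import Order.TTheory GRing.Theory Num.Theory.
Set Implicit Arguments. Unset Strict Implicit. Unset Printing Implicit Defensive.
Local Open Scope ring_scope.

(* Fix a partial order R whose comparability graph is G, and let e(S) be the
   number of linear extensions of R restricted to S, so that
   e(S) = sum_(x minimal in S) e(S \ x).  For an antichain A of S one has
   sum_(v in A) e(S \ v) <= e(S): expanding every e(S \ v) by the recursion and
   regrouping the terms under the minimal elements x of S, each group is the
   same sum for an antichain of S \ x, namely A \ x, enlarged when x is in A
   by {y | x is the only element of S below y}; so induction applies.  A proper colouring of G[S] with chi(S)
   colours splits S into chi(S) antichains, whence
   sum_(v in S) e(S \ v) <= chi(S) e(S).  Both the left-hand side of the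
   theorem and e(V) are sums, over all orderings of V, of products of weights
   of the successive remainders; with the weight 1/chi the bound above gives
   by induction that the sum is at most e(V), and e(V) is the number of linear
   extensions of the acyclic orientation u -> v for u < v, hence at most
   epsilon(G). *)

Lemma perm_eq_enum_ordP n (t : seq 'I_n) :
  reflect (exists s : 'S_n, t = map s (enum 'I_n)) (perm_eq t (enum 'I_n)).
Proof.
rewrite -[X in perm_eq _ X]val_ord_tuple.
by apply: (iffP tuple_permP) => -[s ->]; exists s;
  apply: eq_map => i; rewrite tnth_ord_tuple.
Qed.

Lemma first_kE n (s : 'S_n) k :
  first_k s k = [set x in take k (map s (enum 'I_n))].
Proof.
have takeE (i : 'I_n) : (i \in take k (enum 'I_n)) = (i < k)%N.
  by rewrite in_take ?mem_enum // index_enum_ord.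
apply/setP=> x; rewrite /first_k !inE -map_take.
by apply/imsetP/mapP => -[i]; rewrite ?inE ?takeE => Hi ->; exists i; rewrite ?inE ?takeE.
Qed.

Section OrderSum.

Variables (n : nat) (w : {set 'I_n} -> 'I_n -> rat).

Fixpoint weight_seq (S : {set 'I_n}) (t : seq 'I_n) : rat :=
  if t is v :: t' then w S v * weight_seq (S :\ v) t' else 1.

Definition order_sum (S : {set 'I_n}) : rat :=
  \sum_(t <- permutations (enum S)) weight_seq S t.

Lemma order_sum0 : order_sum set0 = 1.
Proof. by rewrite /order_sum enum_set0 big_seq1. Qed.

Lemma order_sumE S : S != set0 ->
  order_sum S = \sum_(v in S) w S v * order_sum (S :\ v).
Proof.
move=> S_neq0; have S_gt0 : (0 < size (enum S))%N by rewrite -cardE card_gt0.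
rewrite /order_sum (perm_big _ (permutationsE S_gt0)) big_allpairs_dep /=.
rewrite undup_id ?enum_uniq // big_enum; apply: eq_bigr => v Sv.
have remE : perm_eq (rem v (enum S)) (enum (S :\ v)).
  apply: uniq_perm => [|//|x]; rewrite ?rem_uniq ?enum_uniq //.
  by rewrite mem_rem_uniq ?enum_uniq // !inE !mem_enum in_setD1.
by rewrite (perm_big _ (perm_permutations remE)) big_distrr.
Qed.

Lemma weight_seq_prod (x0 : 'I_n) S t :
  weight_seq S t = \prod_(k < size t) w (S :\: [set x in take k t]) (nth x0 t k).
Proof.
elim: t S => [|v t IH] S /=; first by rewrite big_ord0.
rewrite big_ord_recl IH /= (_ : [set x in [::]] = set0) ?setD0; last first.
  by apply/setP => x; rewrite !inE.
by congr (_ * _); apply: eq_bigr => k _; rewrite set_cons setDDl.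
Qed.

End OrderSum.

Lemma order_sum_perm n (w : {set 'I_n} -> 'I_n -> rat) :
  \sum_(s : 'S_n) \prod_(k < n) w (~: first_k s k) (s k) = order_sum w setT.
Proof.
have prodE (s : 'S_n) : \prod_(k < n) w (~: first_k s k) (s k)
    = weight_seq w setT (map s (enum 'I_n)).
  move: w s; case: n => [|m] w s; first by rewrite big_ord0 enum_ord0.
  rewrite (weight_seq_prod _ ord0) size_map size_enum_ord.
  apply: eq_bigr => k _.
  by rewrite first_kE setTD (nth_map ord0) ?size_enum_ord // nth_ord_enum.
rewrite (eq_bigr _ (fun s _ => prodE s)) -(big_map _ xpredT) /order_sum.
apply: perm_big; apply: uniq_perm; rewrite ?permutations_uniq //.
  rewrite map_inj_uniq ?index_enum_uniq // => s s' /eq_in_map eq_ss'.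
  by apply/permP => i; rewrite eq_ss' ?mem_enum.
move=> t; rewrite mem_permutations enum_setT -enumT.
apply/mapP/perm_eq_enum_ordP => -[s]; last by move->; exists s; rewrite ?mem_index_enum.
by move=> _ ->; exists s.
Qed.

Lemma exchange_big_setD1 n (A B : {set 'I_n}) (F : 'I_n -> 'I_n -> rat) :
  \sum_(v in A) \sum_(x in B :\ v) F v x = \sum_(x in B) \sum_(v in A :\ x) F v x.
Proof.
rewrite (exchange_big_dep (fun x => x \in B)) => [|v x _]; last by rewrite inE => /andP[].
apply: eq_bigr => x Bx; apply: eq_bigl => v.
by rewrite !inE Bx andbT andbC eq_sym.
Qed.

Section LinearExtensions.

Variables (n : nat) (R : rel 'I_n).
Hypotheses (R_anti : antisymmetric R) (R_trans : transitive R).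
Implicit Types (S A B : {set 'I_n}) (u v x y : 'I_n).

Definition strict (u v : 'I_n) : bool := (u != v) && R u v.

Definition minimal (S : {set 'I_n}) (x : 'I_n) : bool :=
  [forall u in S, ~~ strict u x].

Definition minimals (S : {set 'I_n}) : {set 'I_n} := [set x in S | minimal S x].

(* An ordering of [S] is counted iff each of its vertices is minimal among
   the vertices not yet placed. *)
Definition linext (S : {set 'I_n}) : rat :=
  order_sum (fun T x => (minimal T x)%:R) S.

Definition only_lower (S : {set 'I_n}) (v x : 'I_n) : bool :=
  strict v x && [forall u in S, strict u x ==> (u == v)].

Definition only_above (S : {set 'I_n}) (v : 'I_n) : {set 'I_n} :=
  [set x in S | only_lower S v x].

Definition antichain (A : {set 'I_n}) : Prop := {in A &, forall u v, ~~ strict u v}.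

Lemma linext0 : linext set0 = 1.
Proof. exact: order_sum0. Qed.

Lemma linext_ge0 S : 0 <= linext S.
Proof.
rewrite /linext /order_sum; apply: sumr_ge0 => t _.
by elim: t S => //= v t IH S; rewrite mulr_ge0.
Qed.

Lemma linextE S : S != set0 ->
  linext S = \sum_(x in minimals S) linext (S :\ x).
Proof.
move=> S_neq0; rewrite /linext order_sumE // /minimals big_set big_mkcondr.
by apply: eq_bigr => x _; case: minimal; rewrite ?mul1r ?mul0r.
Qed.

Lemma linext_set1 v : linext [set v] = 1.
Proof.
have minv : minimals [set v] = [set v].
  apply/setP => x; rewrite !inE andb_idr // => /eqP->.
  by apply/forall_inP => u /set1P->; rewrite /strict eqxx.
rewrite linextE; last by apply/set0Pn; exists v; rewrite set11.
by rewrite minv big_set1 setDv; apply: linext0.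
Qed.

Lemma only_lower_minimal S v x : only_lower S v x -> minimal S v.
Proof.
case/andP=> /andP[_ Rvx] /forall_inP only_v.
apply/forall_inP => u Su; apply/negP => /andP[neq_uv Ruv].
have strict_ux : strict u x.
  rewrite /strict (R_trans Ruv Rvx) andbT; apply: contra neq_uv => /eqP eq_ux.
  by apply/eqP/R_anti; rewrite Ruv eq_ux Rvx.
by move: (only_v u Su); rewrite strict_ux (negbTE neq_uv).
Qed.

Lemma minimal_setD1 S v x : v \in S ->
  minimal (S :\ v) x = minimal S x || only_lower S v x.
Proof.
move=> Sv; apply/forall_inP/orP => [min_x | ].
  have [lt_vx | nlt_vx] := boolP (strict v x).
    right; rewrite /only_lower lt_vx; apply/forall_inP => u Su; apply/implyP => lt_ux.
    by apply: contraT => neq_uv; move: (min_x u); rewrite !inE neq_uv Su lt_ux => /(_ isT).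
  left; apply/forall_inP => u Su; have [->//|neq_uv] := eqVneq u v.
  by apply: min_x; rewrite !inE neq_uv.
case=> [/forall_inP min_x | /andP[_ /forall_inP only_v]] u; rewrite !inE => /andP[neq_uv Su].
  exact: min_x.
by apply: contra neq_uv => lt_ux; have /implyP/(_ lt_ux) := only_v u Su.
Qed.

Lemma minimals_setD1 S v : v \in S ->
  minimals (S :\ v) = minimals S :\ v :|: only_above S v.
Proof.
move=> Sv; apply/setP => x; rewrite !inE minimal_setD1 //.
case only_vx: (only_lower S v x); last by rewrite andbF !orbF -andbA.
case/andP: only_vx => /andP[neq_vx _] _.
by rewrite eq_sym neq_vx orbT !andbT; case: (x \in S); rewrite ?orbT.
Qed.

Lemma linext_setD1E S v : v \in S -> S :\ v != set0 ->
  linext (S :\ v) = \sum_(x in minimals S :\ v) linext (S :\ x :\ v)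
                    + \sum_(x in only_above S v) linext (S :\ v :\ x).
Proof.
move=> Sv Sv_neq0; rewrite linextE // minimals_setD1 //.
rewrite (eq_bigl [predU minimals S :\ v & only_above S v]) => [|x]; last first.
  by rewrite !inE.
rewrite bigU /=; first by congr (_ + _); apply: eq_bigr => x _; rewrite !setDDl setUC.
rewrite -setI_eq0; apply/eqP/setP => x; rewrite !inE; apply/negP.
case/andP=> /and3P[_ _ /forall_inP min_x] /andP[_ /andP[lt_vx _]].
by have := min_x v Sv; rewrite lt_vx.
Qed.

Lemma sum_only_above S A (F : 'I_n -> 'I_n -> rat) : A \subset S ->
  \sum_(v in A) \sum_(y in only_above S v) F v y
    = \sum_(x in minimals S :&: A) \sum_(y in only_above S x) F x y.
Proof.
move=> sAS; rewrite setIC (big_setID (minimals S)) /= [X in _ + X]big1 ?addr0 // => v.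
rewrite !inE => /andP[not_min_v Av]; apply: big_pred0 => y; rewrite !inE.
apply/negP => /andP[_ /only_lower_minimal min_v].
by rewrite (subsetP sAS v Av) min_v in not_min_v.
Qed.

Lemma antichainS A B : B \subset A -> antichain A -> antichain B.
Proof. by move=> /subsetP sBA acA u v Bu Bv; apply: acA; apply: sBA. Qed.

Lemma antichain_only_above S A x : A \subset S -> x \in A -> antichain A ->
  antichain (A :\ x :|: only_above S x).
Proof.
move=> /subsetP sAS Ax acA u v; rewrite !inE.
case/orP=> [/andP[neq_ux Au] | /andP[Su /andP[lt_xu _]]];
case/orP=> [/andP[neq_vx Av] | /andP[_ /andP[_ /forall_inP only_x]]];
apply/negP => lt_uv.
- by have := acA u v Au Av; rewrite lt_uv.
- by have /implyP/(_ lt_uv) := only_x u (sAS u Au); rewrite (negbTE neq_ux).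
- case/andP: lt_xu => _ Rxu; case/andP: lt_uv => _ Ruv.
  by have := acA x v Ax Av; rewrite /strict eq_sym neq_vx (R_trans Rxu Ruv).
- have /implyP/(_ lt_uv)/eqP eq_ux := only_x u Su.
  by move: lt_xu; rewrite /strict eq_ux eqxx.
Qed.

Lemma only_above_disjoint S A x : x \in A -> antichain A ->
  [disjoint A :\ x & only_above S x].
Proof.
move=> Ax acA; rewrite -setI_eq0; apply/eqP/setP => y; rewrite !inE; apply/negP.
by case/andP=> /andP[_ Ay] /andP[_ /andP[lt_xy _]]; have := acA x y Ax Ay; rewrite lt_xy.
Qed.

Lemma only_above_subset S A x : A \subset S ->
  A :\ x :|: only_above S x \subset S :\ x.
Proof.
move=> sAS; apply/subsetP => y; rewrite !inE => /orP[/andP[-> /(subsetP sAS)] // |].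
by case/andP=> Sy /andP[/andP[neq_xy _] _]; rewrite eq_sym neq_xy.
Qed.

Lemma sum_linext_setD1_antichainE S A : A \subset S -> (1 < #|S|)%N ->
  \sum_(v in A) linext (S :\ v)
    = \sum_(x in minimals S) \sum_(v in A :\ x) linext (S :\ x :\ v)
      + \sum_(x in minimals S :&: A) \sum_(y in only_above S x) linext (S :\ x :\ y).
Proof.
move=> sAS S_gt1; rewrite -exchange_big_setD1 -sum_only_above // -big_split /=.
apply: eq_bigr => v Av; have Sv := subsetP sAS v Av.
rewrite linext_setD1E // -card_gt0; move: S_gt1.
by rewrite (cardsD1 v S) Sv.
Qed.

Lemma sum_linext_antichain_small S A : (#|S| <= 1)%N -> A \subset S ->
  \sum_(v in A) linext (S :\ v) <= linext S.
Proof.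
rewrite leq_eqVlt ltnS leqn0 cards_eq0 => /orP[/cards1P[w ->] | /eqP ->].
  rewrite linext_set1 subset1 => /orP[] /eqP ->; last by rewrite big_set0 ler01.
  by rewrite big_set1 setDv linext0.
by rewrite subset0 => /eqP ->; rewrite big_set0 linext_ge0.
Qed.

Lemma sum_linext_antichain S A : A \subset S -> antichain A ->
  \sum_(v in A) linext (S :\ v) <= linext S.
Proof.
elim: {S}_.+1 {-2}S (ltnSn #|S|) A => // k IH S le_S_k A sAS acA.
have [S_le1 | S_gt1] := leqP #|S| 1; first exact: sum_linext_antichain_small.
have IH' x B : x \in S -> B \subset S :\ x -> antichain B ->
    \sum_(v in B) linext (S :\ x :\ v) <= linext (S :\ x).
  move=> Sx; apply: IH; rewrite -ltnS (leq_trans _ le_S_k) //.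
  by rewrite (cardsD1 x S) Sx.
rewrite sum_linext_setD1_antichainE // linextE -?card_gt0 ?(ltnW S_gt1) //.
rewrite !(@big_setID _ _ _ _ (minimals S) A) /= addrAC.
apply: lerD; last first.
  apply: ler_sum => x; rewrite !inE => /andP[_ /andP[Sx _]].
  apply: IH' => //; first exact: setSD.
  by apply: antichainS acA; apply: subD1set.
rewrite -big_split /=; apply: ler_sum => x /setIP[/setIdP[Sx _] Ax].
rewrite -bigU ?only_above_disjoint //= -(eq_bigl _ _ (fun y => in_setU y _ _)).
by apply: IH' => //; [apply: only_above_subset | apply: antichain_only_above].
Qed.

End LinearExtensions.

Lemma chi_colorable n (e : rel 'I_n) S : colorable e S (chi e S).
Proof. by rewrite /chi; case: ex_minnP. Qed.

Lemma chi_gt0 n (e : rel 'I_n) S : S != set0 -> (0 < chi e S)%N.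
Proof.
case/set0Pn=> x Sx; rewrite lt0n; apply/negP => /eqP chi0.
by have := chi_colorable e S; rewrite chi0 => /existsP[f _]; case: (f x).
Qed.

Section ChromaticBound.

Variables (n : nat) (e R : rel 'I_n).
Hypotheses (R_anti : antisymmetric R) (R_trans : transitive R).
Hypothesis e_R : forall u v, u != v -> e u v = R u v || R v u.

Lemma sum_linext_setD1_le_colorable S c : colorable e S c ->
  \sum_(v in S) linext R (S :\ v) <= c%:R * linext R S.
Proof.
case/existsP=> f /forall_inP proper_f.
rewrite (partition_big f xpredT) //= mulr_natl -[c in _ *+ c]card_ord -sumr_const.
apply: ler_sum => j _; rewrite -big_set /=.
apply: (sum_linext_antichain R_anti R_trans) => [|u v]; first by apply/subsetP => x /setIdP[].
case/setIdP=> Su /eqP fu /setIdP[Sv /eqP fv]; apply/negP => /andP[neq_uv Ruv].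
by have /forall_inP/(_ v Sv) := proper_f u Su; rewrite neq_uv e_R // Ruv fu fv eqxx.
Qed.

Lemma order_sum_inv_chi_le_linext S :
  order_sum (fun T _ => (chi e T)%:R^-1) S <= linext R S.
Proof.
elim: {S}_.+1 {-2}S (ltnSn #|S|) => // k IH S le_S_k.
have [-> | S_neq0] := eqVneq S set0; first by rewrite order_sum0 linext0.
have chi_pos : 0 < (chi e S)%:R :> rat by rewrite ltr0n chi_gt0.
rewrite order_sumE // -mulr_sumr ler_pdivrMl //.
apply: le_trans (sum_linext_setD1_le_colorable (chi_colorable e S)).
apply: ler_sum => v Sv; apply: IH; rewrite -ltnS (leq_trans _ le_S_k) //.
by rewrite (cardsD1 v S) Sv.
Qed.

End ChromaticBound.

Lemma prodr_nat_bool (I : finType) (P : pred I) :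
  \prod_(i : I) (P i)%:R = [forall i, P i]%:R :> rat.
Proof.
have [/forallP allP | /forallPn[i not_Pi]] := boolP [forall i, P i].
  by rewrite big1 // => i _; rewrite allP.
by rewrite (bigD1 i) //= (negbTE not_Pi) mul0r.
Qed.

Lemma mem_first_k n (s : 'S_n) k x : (x \in first_k s k) = ((s^-1)%g x < k)%N.
Proof.
apply/imsetP/idP => [[i] | lt_k]; first by rewrite inE => lt_ik ->; rewrite permK.
by exists ((s^-1)%g x); rewrite ?inE ?permKV.
Qed.

Lemma monotone_perm_minimal n (R : rel 'I_n) (s : 'S_n) :
  [forall u, forall v, strict R u v ==> ((s^-1)%g u < (s^-1)%g v)%N]
    = [forall k : 'I_n, minimal R (~: first_k s k) (s k)].
Proof.
apply/idP/idP => /forallP mono.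
  apply/forallP => k; apply/forall_inP => u; rewrite inE mem_first_k -leqNgt => le_ku.
  apply/negP => lt_uk; have /forallP/(_ (s k)) := mono u.
  by rewrite lt_uk permK /= ltnNge le_ku.
apply/forallP => u; apply/forallP => v; apply/implyP => lt_uv.
rewrite ltnNge; apply/negP => le_vu.
have /forall_inP/(_ u) := mono ((s^-1)%g v).
by rewrite inE mem_first_k -leqNgt le_vu permKV lt_uv => /(_ isT).
Qed.

Section StrictOrientation.

Variables (n : nat) (R : rel 'I_n).
Hypotheses (R_refl : reflexive R) (R_anti : antisymmetric R) (R_trans : transitive R).

Definition strict_orientation : {set 'I_n * 'I_n} := [set p | strict R p.1 p.2].

Lemma orel_strict_orientation : orel strict_orientation =2 strict R.
Proof. by move=> u v; rewrite /orel inE. Qed.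

Lemma connect_strict_orientation u v : connect (orel strict_orientation) u v -> R u v.
Proof.
case/connectP=> p; elim: p u => [|w p IH] u /=; first by move=> _ ->.
by rewrite orel_strict_orientation => /andP[/andP[_ Ruw] /IH Rwv] /Rwv; apply: R_trans.
Qed.

Lemma induced_lt_strict_orientation : induced_lt strict_orientation =2 strict R.
Proof.
move=> u v; rewrite /induced_lt; apply/andP/andP => -[neq_uv].
  by move/connect_strict_orientation.
by move=> Ruv; split => //; apply: connect1; rewrite orel_strict_orientation /strict neq_uv.
Qed.

Lemma strict_orientation_acyclic : acyclic_or strict_orientation.
Proof.
apply/forallP => u; apply/forallP => v; apply/implyP.
rewrite orel_strict_orientation => /andP[neq_uv Ruv].
apply/negP => /connect_strict_orientation Rvu.
by move/eqP: neq_uv; apply; apply: R_anti; rewrite Ruv Rvu.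
Qed.

Lemma strict_orientation_orientation (e : rel 'I_n) : irreflexive e ->
  (forall u v, u != v -> e u v = R u v || R v u) -> orientation e strict_orientation.
Proof.
move=> e_irr e_R; apply/forallP => u; apply/forallP => v.
rewrite -!/(orel _ _ _) !orel_strict_orientation /strict eq_sym.
have [<- | neq_uv] := eqVneq u v; first by rewrite e_irr.
rewrite e_R //= eqxx /=; apply/negP => /andP[Ruv Rvu].
by move/eqP: neq_uv; apply; apply: R_anti; rewrite Ruv Rvu.
Qed.

Lemma linext_count_strict_orientation :
  (linext_count strict_orientation)%:R = linext R setT.
Proof.
rewrite /linext -order_sum_perm /linext_count -sum1_card natr_sum big_mkcond /=.
rewrite (reindex_inj invg_inj) /=; apply: eq_bigr => s _.
rewrite prodr_nat_bool -monotone_perm_minimal inE.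
rewrite (eq_forallb (fun u => eq_forallb (fun v =>
  congr1 (implb^~ _) (induced_lt_strict_orientation u v)))).
by case: ifP.
Qed.

End StrictOrientation.

Theorem theorem4p3 (n : nat) (e : rel 'I_n)
  (e_sym : symmetric e) (e_irr : irreflexive e)
  (e_comp : comparability_graph e) :
  \sum_(s : 'S_n) \prod_(k < n) ((chi e (~: first_k s k))%:R : rat)^-1
    <= (epsilon e)%:R.
Proof.
have [R [R_refl [R_anti [R_trans e_R]]]] := e_comp.
rewrite (order_sum_perm (fun S _ => (chi e S)%:R^-1)).
apply: (le_trans (order_sum_inv_chi_le_linext R_anti R_trans e_R _)).
rewrite -(linext_count_strict_orientation R_refl R_trans) ler_nat.
apply: (leq_bigmax_cond (strict_orientation R)).
by rewrite (strict_orientation_orientation R_anti e_irr e_R)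
           (strict_orientation_acyclic R_refl R_anti R_trans).
Qed.
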